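(* Let $d$ be an odd positive integer. Regular 3-designs of size $n$ on $S^d$ exist when (i) $n$ is even and $n \ge 2d+2$; (ii) $n$ is odd and $n \ge 3d+2$; and (iii) $n$ is odd and $n \ge \frac{p}{p+1}(3d+3)$, where $p$ is a divisor of $n$ which is congruent to $5 \bmod 6$. In particular, there are regular 3-designs of size $n$ on $S^d$ when $n$ is an odd integer divisible by 5 with $n \ge 5(d+1)/2$.
   Context: For positive integers $n$ and $m$, $s(m) = \big(\sin(\tfrac{2\pi}{n}km)\big)_{k=1}^n$, $c(m) = \big(\cos(\tfrac{2\pi}{n}km)\big)_{k=1}^n$. A set $S$ of integers is a Sidon-type set of strength $t$ in $\mathbb{Z}_n$ if no non-trivial sum $\varepsilon_1x_1+\cdots+\varepsilon_tx_t$ with $\varepsilon_i\in\{0,\pm1\}$, $x_i \in S$ (not necessarily distinct) is $\equiv 0 \bmod n$; non-trivial means some $\varepsilon_i\ne0$ and no element appears with both coefficients $+1$ and $-1$. For $d$ odd and $e=(d+1)/2$, a regular 3-design of size $n$ on $S^d$ is the collection of the $n$ column vectors of $\sqrt{2/(d+1)}\,A(S)$, where $S=\{m_1,\dots,m_e\}$ is a set of $e$ integers forming a Sidon-type set of strength 3 in $\mathbb{Z}_n$, and $A(S)$ is the $2e\times n$ matrix with rows $s(m_1),c(m_1),\dots,s(m_e),c(m_e)$. *)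

From mathcomp Require Import all_boot all_order all_algebra.
From mathcomp Require Import all_classical all_reals all_analysis.
Set Implicit Arguments. Unset Strict Implicit. Unset Printing Implicit Defensive.
Import Order.TTheory GRing.Theory Num.Theory.
Local Open Scope ring_scope.

Definition sidon3 (n : nat) (S : seq int) : Prop :=
  forall (x : 'I_3 -> int) (eps : 'I_3 -> int),
    (forall i, x i \in S) ->
    (forall i, eps i \in [:: -1; 0; 1]) ->
    (exists i, eps i != 0) ->
    (forall i j, x i = x j -> ~ (eps i = 1 /\ eps j = -1)) ->
    ~ (n%:Z %| \sum_(i < 3) eps i * x i)%Z.

(* A(S): rows s(m_1), c(m_1), ..., s(m_e), c(m_e); rows indexed 0..d,
   row 2j is s(m_{j+1}), row 2j+1 is c(m_{j+1}); column j corresponds to k = j+1. *)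
Definition Amat (R : realType) (n d : nat) (S : seq int) : 'M[R]_(d.+1, n) :=
  \matrix_(i < d.+1, j < n)
    (let t := 2 * pi * (j.+1)%:R * (S`_(i./2))%:~R / n%:R in
     if odd i then cos t else sin t).

(* X is a regular 3-design of size n on S^d (its n columns are the points). *)
Definition regular_3design (R : realType) (n d : nat) (X : 'M[R]_(d.+1, n)) : Prop :=
  exists S : seq int,
    [/\ uniq S, size S = (d.+1)./2, sidon3 n S &
        X = Num.sqrt (2 / (d.+1)%:R) *: Amat R n d S].

From mathcomp Require Import all_boot all_order all_algebra.
From mathcomp Require Import all_classical all_reals all_analysis.
From mathcomp Require Import zify.
Set Implicit Arguments.
Unset Strict Implicit.
Unset Printing Implicit Defensive.

Import Order.TTheory GRing.Theory Num.Theory.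
Local Open Scope ring_scope.

(* A Sidon-type set of strength 3 of size e = (d+1)/2 is built in two ways.
   For n even, take odd numbers in (0, n/2): a signed sum with an odd number of
   terms is odd, while a signed sum of two terms lies strictly between -n and n, so
   it is divisible by n only in the excluded form x - x.
   For p | n, take numbers in [0, n) whose residues mod p lie in (k, 2k+1], where
   6k + 3 < p: the signed sum of the residues is divisible by p and smaller than p in
   absolute value, hence zero; since 2(k+1) > 2k+1 this leaves exactly one sign +
   and one sign -, and then n | x - y forces x = y.  There are (n/p)(k+1) such
   numbers; p = n gives (ii), p = 6k + 5 gives (iii), and p = 5 the last claim. *)

Lemma dvdz_small_eq0 (m : nat) (s : int) : (m%:Z %| s)%Z -> `|s| < m%:Z -> s = 0.
Proof.
move=> /dvdzP[c ->]; have [->|c0] := eqVneq c 0; first by rewrite mul0r.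
have : m%:Z <= `|c * m%:Z| by rewrite normrM ler_peMl //; lia.
by move=> /le_lt_trans h /h; rewrite ltxx.
Qed.

Lemma sum_set_bounds (R : numDomainType) (I : finType) (A : {set I}) (y : I -> R)
    (lo hi : R) :
  {in A, forall i, lo <= y i <= hi} -> lo *+ #|A| <= \sum_(i in A) y i <= hi *+ #|A|.
Proof.
by move=> hy; rewrite -!sumr_const; apply/andP; split; apply: ler_sum => i /hy /andP[].
Qed.

Definition sign_set (I : finType) (eps : I -> int) (s : int) : {set I} :=
  [set i | eps i == s].

Section SignedSums.

Variables (I : finType) (eps : I -> int).
Hypothesis eps_sign : forall i, eps i \in [:: -1; 0; 1].

Local Notation P := (sign_set eps 1).
Local Notation N := (sign_set eps (-1)).

Lemma eps_signP i : [\/ eps i = -1, eps i = 0 | eps i = 1].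
Proof. by have := eps_sign i; rewrite !inE => /or3P[]/eqP; constructor. Qed.

Lemma sum_signE (y : I -> int) :
  \sum_i eps i * y i = \sum_(i in P) y i - \sum_(i in N) y i.
Proof.
rewrite !(big_mkcond (fun i => i \in _)) -sumrB; apply: eq_bigr => i _; rewrite !inE.
by case: (eps_signP i) => ->; rewrite /= ?mul1r ?mulN1r ?mul0r ?subr0 ?sub0r.
Qed.

Lemma card_sign_sets : (exists i, eps i != 0) -> (0 < #|P| + #|N| <= #|I|)%N.
Proof.
case=> i epsi; have disjPN : #|P :&: N| = 0%N.
  by apply: eq_card0 => j; rewrite !inE; case: eqP => // ->.
rewrite -cardsUI disjPN addn0 max_card andbT; apply/card_gt0P; exists i.
by rewrite !inE; case: (eps_signP i) epsi => ->.
Qed.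

Lemma sum_sign_pair (y : I -> int) : #|P| = 1%N -> #|N| = 1%N ->
  exists i j, [/\ eps i = 1, eps j = -1 & \sum_k eps k * y k = y i - y j].
Proof.
move=> /eqP/cards1P[i Pi] /eqP/cards1P[j Nj]; exists i, j.
have /[!inE] /eqP epsi : i \in P by rewrite Pi set11.
have /[!inE] /eqP epsj : j \in N by rewrite Nj set11.
by rewrite sum_signE Pi Nj !big_set1.
Qed.

Lemma not_dvd_sum_sign_pair (n : nat) (x : I -> int) :
  (forall i j, x i = x j -> ~ (eps i = 1 /\ eps j = -1)) ->
  (forall i, 0 <= x i < n%:Z) -> #|P| = 1%N -> #|N| = 1%N ->
  ~ (n%:Z %| \sum_i eps i * x i)%Z.
Proof.
move=> compat xn P1 N1; have [i [j [epsi epsj ->]]] := sum_sign_pair x P1 N1.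
by rewrite -eqz_mod_dvd !modz_small ?xn // => /eqP xij; apply: compat xij _.
Qed.

End SignedSums.

Lemma interval_counts_balance (a b k : nat) : (0 < a + b <= 3)%N ->
  (k + 1)%:Z *+ a <= (2 * k + 1)%:Z *+ b -> (k + 1)%:Z *+ b <= (2 * k + 1)%:Z *+ a ->
  a = 1%N /\ b = 1%N.
Proof. by case: a b => [|[|[|[|a]]]] [|[|[|[|b]]]] //=; lia. Qed.

Lemma sidon3_residue_interval (n p k : nat) (S : seq int) :
  (p %| n)%N -> (6 * k + 3 < p)%N ->
  {in S, forall s, 0 <= s < n%:Z /\ k%:Z < (s %% p%:Z)%Z <= (2 * k + 1)%:Z} ->
  sidon3 n S.
Proof.
move=> pn kp hS x eps xS eps_sign nz compat ndvd.
have xn i : 0 <= x i < n%:Z by case: (hS _ (xS i)).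
pose r i := (x i %% p%:Z)%Z.
have r_bounds i : (k + 1)%:Z <= r i <= (2 * k + 1)%:Z.
  by case: (hS _ (xS i)) => _ /andP[? ?]; apply/andP; split=> //; rewrite /r; lia.
have p_dvd_r : (p%:Z %| \sum_i eps i * r i)%Z.
  have -> : \sum_i eps i * r i =
            \sum_i eps i * x i - \sum_i eps i * (x i %/ p%:Z)%Z * p%:Z.
    rewrite -sumrB; apply: eq_bigr => i _.
    by rewrite -mulrA -mulrBr /r {2}(divz_eq (x i) p%:Z) addrC addKr.
  rewrite rpredB ?(dvdz_trans _ ndvd) //.
  by apply: rpred_sum => i _; apply: dvdz_mull (dvdzz _).
have r_balanced : \sum_i eps i * r i = 0.
  apply: (dvdz_small_eq0 p_dvd_r); apply: le_lt_trans (ler_norm_sum _ _ _) _.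
  apply: (@le_lt_trans _ _ (\sum_(i < 3) (2 * k + 1)%:Z)); last first.
    by rewrite sumr_const card_ord; lia.
  apply: ler_sum => i _; rewrite normrM -[X in _ <= X]mul1r ler_pM //.
    by case: (eps_signP eps_sign i) => ->.
  by have := r_bounds i; lia.
move: r_balanced; rewrite sum_signE // => /eqP; rewrite subr_eq0 => /eqP r_PN.
have := card_sign_sets eps_sign nz; rewrite card_ord.
have /andP[] := sum_set_bounds (A := sign_set eps 1) (fun i _ => r_bounds i).
have /andP[] := sum_set_bounds (A := sign_set eps (-1)) (fun i _ => r_bounds i).
rewrite r_PN => N_lo N_hi P_lo P_hi PN_card.
have [P1 N1] :=
  interval_counts_balance PN_card (le_trans P_lo N_hi) (le_trans N_lo P_hi).
exact: (not_dvd_sum_sign_pair eps_sign compat xn P1 N1 ndvd).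
Qed.

Lemma sidon3_odd_small (n : nat) (S : seq int) : ~~ odd n ->
  {in S, forall s, (2 %| s - 1)%Z /\ 0 < 2 * s < n%:Z} -> sidon3 n S.
Proof.
move=> n_even hS x eps xS eps_sign nz compat ndvd.
have x_odd i : (2 %| x i - 1)%Z by case: (hS _ (xS i)).
have xn i : 0 <= x i < n%:Z by case: (hS _ (xS i)) => _; lia.
have x2_bounds i : 2 <= 2 * x i <= n%:Z - 1.
  by case: (hS _ (xS i)) => /dvdzP[c xc] ?; apply/andP; split; lia.
set a := #|sign_set eps 1|; set b := #|sign_set eps (-1)|.
have ab_even : (2 %| a%:Z - b%:Z)%Z.
  have -> : a%:Z - b%:Z = \sum_i eps i * x i - \sum_i eps i * (x i - 1).
    rewrite -sumrB (eq_bigr (fun i => eps i * 1)) => [|i _]; last first.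
      by rewrite -mulrBr opprB addrC subrK.
    by rewrite sum_signE // !sumr_const -!natz.
  rewrite rpredB //; first by apply: dvdz_trans ndvd; rewrite dvdzE /= dvdn2.
  by apply: rpred_sum => i _; apply: dvdz_mull (x_odd i).
have := card_sign_sets eps_sign nz; rewrite card_ord => ab.
have [[P1 N1]|ab2] : (a = 1 /\ b = 1)%N \/ (a = 2 /\ b = 0 \/ a = 0 /\ b = 2)%N.
  by case/dvdzP: ab_even => c; lia.
  exact: (not_dvd_sum_sign_pair eps_sign compat xn P1 N1 ndvd).
have /andP[P_lo P_hi] :
    2 *+ a <= 2 * \sum_(i in sign_set eps 1) x i <= (n%:Z - 1) *+ a.
  by rewrite mulr_sumr; apply: sum_set_bounds => i _; apply: x2_bounds.
have /andP[N_lo N_hi] :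
    2 *+ b <= 2 * \sum_(i in sign_set eps (-1)) x i <= (n%:Z - 1) *+ b.
  by rewrite mulr_sumr; apply: sum_set_bounds => i _; apply: x2_bounds.
have := dvdz_small_eq0 ndvd; rewrite sum_signE //.
by case: ab2 => -[aE bE]; rewrite aE bE in P_lo P_hi N_lo N_hi; lia.
Qed.

Lemma sidon3_subset (n : nat) (S T : seq int) :
  {subset S <= T} -> sidon3 n T -> sidon3 n S.
Proof. by move=> ST hT x eps xS; apply: hT => i; apply: ST. Qed.

Lemma regular_3design_of_sidon3 (R : realType) (n d : nat) (S : seq int) :
  uniq S -> ((d.+1)./2 <= size S)%N -> sidon3 n S ->
  exists X : 'M[R]_(d.+1, n), regular_3design X.
Proof.
move=> uS eS hS; set e := (d.+1)./2.
exists (Num.sqrt (2 / (d.+1)%:R) *: Amat R n d (take e S)), (take e S).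
split=> //; [exact: take_uniq | exact: size_takel |].
by apply: sidon3_subset hS => s /mem_take.
Qed.

Lemma half_succ_odd (d : nat) : odd d -> (2 * (d.+1)./2 = d.+1)%N.
Proof. by move=> d_odd; rewrite mul2n -[in RHS](odd_double_half d.+1) /= d_odd. Qed.

Definition odd_seq (e : nat) : seq int := [seq (2 * j + 1)%:Z | j <- iota 0 e].

Lemma regular_3design_even (R : realType) (d n : nat) :
  odd d -> ~~ odd n -> (2 * d + 2 <= n)%N ->
  exists X : 'M[R]_(d.+1, n), regular_3design X.
Proof.
move=> d_odd n_even dn; apply: (@regular_3design_of_sidon3 R n d (odd_seq (d.+1)./2)).
- by rewrite map_inj_uniq ?iota_uniq // => i j [] /eqP; lia.
- by rewrite size_map size_iota.
apply: sidon3_odd_small n_even _ => s /mapP[j]; rewrite mem_iota => /andP[_ je] ->.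
by split; [apply/dvdzP; exists j%:Z | have := half_succ_odd d_odd]; lia.
Qed.

Definition residue_block_seq (q p k : nat) : seq int :=
  [seq (j * p + r)%:Z | j <- iota 0 q, r <- iota k.+1 k.+1].

Lemma residue_block_seq_uniq (q p k : nat) :
  (2 * k + 1 < p)%N -> uniq (residue_block_seq q p k).
Proof.
move=> kp; have p0 : (0 < p)%N by lia.
apply: allpairs_uniq; rewrite ?iota_uniq // => -[j r] [j' r'].
move=> /allpairsP[[j1 r1] [_ rk [-> ->]]] /allpairsP[[j2 r2] [_ r'k [-> ->]]] [jr].
rewrite !mem_iota /= in rk r'k.
have [r1p r2p] : (r1 < p)%N /\ (r2 < p)%N by lia.
have := congr1 (divn^~ p) jr; have := congr1 (modn^~ p) jr.
by rewrite /= !modnMDl !divnMDl // !modn_small ?divn_small ?addn0 // => -> ->.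
Qed.

Lemma regular_3design_residue (R : realType) (d n p k : nat) :
  (p %| n)%N -> (6 * k + 3 < p)%N -> ((d.+1)./2 <= n %/ p * k.+1)%N ->
  exists X : 'M[R]_(d.+1, n), regular_3design X.
Proof.
move=> pn kp e_le.
apply: (@regular_3design_of_sidon3 R n d (residue_block_seq (n %/ p) p k)).
- by apply: residue_block_seq_uniq; lia.
- by rewrite size_allpairs !size_iota.
apply: (sidon3_residue_interval pn kp) => s /allpairsP[[j r] [+ + ->]].
rewrite !mem_iota /= => jq rk; rewrite modz_nat modnMDl modn_small; last by lia.
have : (j.+1 * p <= n)%N by rewrite -(divnK pn) leq_mul2r jq orbT.
by split; lia.
Qed.

Lemma regular_3design_odd_large (R : realType) (d n : nat) :
  odd d -> (3 * d + 2 <= n)%N -> exists X : 'M[R]_(d.+1, n), regular_3design X.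
Proof.
move=> d_odd dn; have dE := half_succ_odd d_odd.
have n0 : (0 < n)%N by lia.
apply: (@regular_3design_residue R d n n ((d.+1)./2).-1) => //; first lia.
by rewrite divnn n0 mul1n; lia.
Qed.

Lemma regular_3design_divisor_5mod6 (R : realType) (d n p : nat) :
  odd d -> (p %| n)%N -> (p %% 6 = 5)%N -> (p * (3 * d + 3) <= p.+1 * n)%N ->
  exists X : 'M[R]_(d.+1, n), regular_3design X.
Proof.
move=> d_odd pn p6 hp; have dE := half_succ_odd d_odd.
have pE := divn_eq p 6; rewrite p6 in pE.
have p0 : (0 < p)%N by lia.
have hq : (3 * d + 3 <= p.+1 * (n %/ p))%N.
  by rewrite -(leq_pmul2l p0) mulnCA [(p * (n %/ p))%N]mulnC divnK.
apply: (@regular_3design_residue R d n p (p %/ 6)) => //; first lia.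
by rewrite {1}pE in hq; nia.
Qed.

Theorem proposition5p3 (R : realType) (d n : nat) :
  odd d ->
  ((((~~ odd n) /\ (2 * d + 2 <= n)%N)
    \/ (odd n /\ (3 * d + 2 <= n)%N)
    \/ (odd n /\ exists p : nat,
          [/\ (p %| n)%N, (p %% 6 = 5)%N & (p * (3 * d + 3) <= p.+1 * n)%N])) ->
   exists X : 'M[R]_(d.+1, n), @regular_3design R n d X)
  /\
  ((odd n /\ (5 %| n)%N /\ (5 * (d + 1) <= 2 * n)%N) ->
   exists X : 'M[R]_(d.+1, n), @regular_3design R n d X).
Proof.
move=> d_odd; split=> [[[n_even dn] | [[_ dn] | [_ [p [pn p6 hp]]]]] | [_ [n5 dn]]].
- exact: regular_3design_even.
- exact: regular_3design_odd_large.
- exact: regular_3design_divisor_5mod6 pn p6 hp.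
- by apply: (regular_3design_divisor_5mod6 _ d_odd n5) => //; lia.
Qed.
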